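(* Consider a TBSC over a field $\mathbb F$ in which the SR link uses a point-to-point code with extended delay profile $(t_1,\dots,t_k)$ for combined symbols $(s_1[t]+m_1(t),\dots,s_k[t]+m_k(t))$, where each $m_i(t)$ is a fixed linear combination of source symbols $s_j[t']$ with $j\in[k]$, $t'<t$; the relay sends $R[t]$ with $r_i[t]=s_i[t-t_i]+m_i(t-t_i)$ (zero if $t-t_i<0$); and the RD link uses a point-to-point code with delay profile $(t'_1,\dots,t'_k)$ for $(r_1[t],\dots,r_k[t])$. If $t_i+t'_i\le T$ for all $i\in[k]$, then the destination recovers every source symbol $s_i[\tau]$ by time $\tau+T$.
   Context: Delay profile of a point-to-point code with messages $(x_1[t],\dots,x_k[t])$: a tuple $(d_1,\dots,d_k)$ such that for every admissible erasure pattern and all $t,i$, $x_i[t]$ is determined by the packets received at times $\le t+d_i$. Extended delay profile $(t_1,\dots,t_k)$ with combined symbols $x_i[t]+m_i(t)$: for every admissible erasure pattern and all $t,i$, $x_i[t]+m_i(t)$ is determined by the packets received at times $\le t+t_i$ (with $m_i(0)=0$). Admissible erasure patterns: on the SR link, in every window of $T+1$ consecutive slots the erased slots form at most one run of consecutive slots of length $\le b_1$; on the RD link likewise with $b_2$. *)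

From mathcomp Require Import all_boot all_order all_algebra.
Set Implicit Arguments. Unset Strict Implicit. Unset Printing Implicit Defensive.
Import GRing.Theory.
Local Open Scope ring_scope.

(* A stream of k message symbols per time slot: x t i = x_i[t]. *)
Definition msgs (F : fieldType) (k : nat) := nat -> 'I_k -> F.

Definition encoder (F : fieldType) (k n : nat) := nat -> msgs F k -> 'rV[F]_n.

Definition causal (F : fieldType) (k n : nat) (enc : encoder F k n) : Prop :=
  forall (t : nat) (x x' : msgs F k),
    (forall u, (u <= t)%N -> x u = x' u) -> enc t x = enc t x'.

(* Erasure pattern: e u = true iff the packet of slot u is erased. *)
Definition erasure := nat -> bool.

Definition admissible (T b : nat) (e : erasure) : Prop :=
  forall w : nat, exists a len : nat, (len <= b)%N /\
    forall u : nat, (w <= u <= w + T)%N -> (e u <-> (a <= u < a + len)%N).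

Definition received (F : fieldType) (k n : nat) (enc : encoder F k n)
  (e : erasure) (x : msgs F k) (u : nat) : option 'rV[F]_n :=
  if e u then None else Some (enc u x).

(* "y(x) t i is determined by the packets received at times <= t + d i", for
   every admissible erasure pattern: any two (admissible pattern, message
   stream) pairs producing the same received packets up to time t + d i
   yield the same value y t i (i.e. a decoder that is a function of these
   received packets exists). *)
Definition determined_by (F : fieldType) (k n : nat) (T b : nat)
  (enc : encoder F k n) (y : msgs F k -> msgs F k) (d : 'I_k -> nat) : Prop :=
  forall (e e' : erasure), admissible T b e -> admissible T b e' ->
  forall (x x' : msgs F k) (t : nat) (i : 'I_k),
    (forall u, (u <= t + d i)%N -> received enc e x u = received enc e' x' u) ->
    y x t i = y x' t i.

Definition delay_profile (F : fieldType) (k n : nat) (T b : nat)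
  (enc : encoder F k n) (d : 'I_k -> nat) : Prop :=
  determined_by T b enc id d.

Definition mcomb (F : fieldType) (k : nat) (c : 'I_k -> nat -> 'I_k -> nat -> F)
  (s : msgs F k) (i : 'I_k) (t : nat) : F :=
  \sum_(j < k) \sum_(t' < t) c i t j t' * s t' j.

Definition combined (F : fieldType) (k : nat) (c : 'I_k -> nat -> 'I_k -> nat -> F)
  (x : msgs F k) : msgs F k :=
  fun t i => x t i + mcomb c x i t.

Definition ext_delay_profile (F : fieldType) (k n : nat) (T b : nat)
  (enc : encoder F k n) (c : 'I_k -> nat -> 'I_k -> nat -> F) (d : 'I_k -> nat) : Prop :=
  determined_by T b enc (combined c) d.

Definition relay_msgs (F : fieldType) (k : nat) (c : 'I_k -> nat -> 'I_k -> nat -> F)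
  (tt : 'I_k -> nat) (s : msgs F k) : msgs F k :=
  fun t i => if (tt i <= t)%N then combined c s (t - tt i)%N i else 0.

From mathcomp Require Import all_boot all_order all_algebra.
Import GRing.Theory.

Set Implicit Arguments.
Unset Strict Implicit.
Unset Printing Implicit Defensive.

(* The relay forwards [s_i[t] + m_i(t)] at time [t + t_i], and the RD code
   delivers it by time [t + t_i + t'_i <= t + T].  Since [m_i(t)] only
   involves source symbols of earlier slots, strong induction on [t] recovers
   [s_i[t]] by subtracting [m_i(t)]. *)

Section RelayStream.
Variables (F : fieldType) (k : nat) (c : 'I_k -> nat -> 'I_k -> nat -> F).

Lemma relay_msgs_shift (tt : 'I_k -> nat) (s : msgs F k) (t : nat) (i : 'I_k) :
  relay_msgs c tt s (t + tt i) i = combined c s t i.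
Proof. by rewrite /relay_msgs leq_addl addnK. Qed.

Lemma mcomb_eq_prefix (s s' : msgs F k) (t : nat) (i : 'I_k) :
  (forall u j, (u < t)%N -> s u j = s' u j) -> mcomb c s i t = mcomb c s' i t.
Proof.
move=> eq_pre; apply: eq_bigr => j _; apply: eq_bigr => u _.
by rewrite eq_pre.
Qed.

Lemma combined_eq_prefix (s s' : msgs F k) (t : nat) (i : 'I_k) :
  (forall u j, (u < t)%N -> s u j = s' u j) ->
  combined c s t i = combined c s' t i -> s t i = s' t i.
Proof. by rewrite /combined => /mcomb_eq_prefix ->; apply: addIr. Qed.

End RelayStream.

Theorem mainTheorem12 (F : fieldType) (k n1 n2 T b1 b2 : nat)
  (c : 'I_k -> nat -> 'I_k -> nat -> F)
  (enc1 : encoder F k n1) (enc2 : encoder F k n2)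
  (tt tt' : 'I_k -> nat) :
  causal enc1 -> causal enc2 ->
  ext_delay_profile T b1 enc1 c tt ->
  delay_profile T b2 enc2 tt' ->
  (forall i : 'I_k, (tt i + tt' i <= T)%N) ->
  forall (e e' : erasure), admissible T b2 e -> admissible T b2 e' ->
  forall (s s' : msgs F k) (tau : nat) (i : 'I_k),
    (forall u, (u <= tau + T)%N ->
       received enc2 e (relay_msgs c tt s) u = received enc2 e' (relay_msgs c tt s') u) ->
    s tau i = s' tau i.
Proof.
move=> _ _ _ dec2 delayT e e' adm_e adm_e' s s' tau.
elim/ltn_ind: tau => tau IH i same_rx.
apply: (combined_eq_prefix (c := c)).
  move=> u j lt_u_tau; apply: (IH u lt_u_tau j) => v le_v.
  by apply: same_rx; rewrite (leq_trans le_v) // leq_add2r ltnW.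
rewrite -!(relay_msgs_shift c tt).
apply: (dec2 e e' adm_e adm_e') => u le_u; apply: same_rx.
by rewrite (leq_trans le_u) // -addnA leq_add2l.
Qed.
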